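(* Let $(X,\perp,Y,T)$ be an implicative frame, and let $x,z\in X$ be arbitrary. Then: (1) $\Gamma x\cap\Gamma z\subseteq\Gamma x\odot\Gamma z$ iff $R_\le xz\subseteq R^{111}xz$; (2) $\Gamma x\odot\Gamma z\subseteq\Gamma x\cap\Gamma z$ iff $R^{111}xz\subseteq R_\le xz$; (3) the algebra $(\mathcal{G}(X),\subseteq,\cap,\vee,\bot,X,\Rightarrow)$ is a complete Heyting algebra in which $\Rightarrow$ is the residual of intersection iff $R^{111}xz=R_\le xz$ for all $x,z\in X$.
   Context: A sorted frame (polarity) is a triple $(X,\perp,Y)$ with $X,Y$ nonempty sets and ${\perp}\subseteq X\times Y$. For $U\subseteq X$ let $U'=\{y\in Y:\forall x\in U\ x\perp y\}$, and for $V\subseteq Y$ let ${}'V=\{x\in X:\forall y\in V\ x\perp y\}$. $A\subseteq X$ is stable if $A={}'(A')$; $B\subseteq Y$ co-stable if $B=({}'B)'$. $\mathcal{G}(X)$, $\mathcal{G}(Y)$ are the complete lattices of stable, resp. co-stable, sets (meets are intersections; joins are closures of unions: ${}'(W')$ for $W\subseteq X$, $W''=({}'W)'$ for $W\subseteq Y$); $\bot$ is the least stable set. Preorders: $x\le z$ iff $\{x\}'\subseteq\{z\}'$ on $X$; $y\le v$ iff ${}'\{y\}\subseteq{}'\{v\}$ on $Y$; separated means both are partial orders. $\Gamma u$ is the set of elements above $u$. For $T\subseteq Y\times X\times Y$, $T'\subseteq X\times X\times Y$ is $uT'xv$ iff $\forall y\,(yTxv\Rightarrow u\perp y)$. An implicative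 frame is $(X,\perp,Y,T)$ with: (F0) $x\perp y$ iff $uT'xy$ for all $u\in X$; (F1) separated; (F2) each $\{y: yTxv\}$ equals $\Gamma w$ for some $w\in Y$; (F3) if $yTxv$, $x_1\le x$, $v_1\le v$ then $yTx_1v_1$; (F4) for all $u,x\in X,v\in Y$, $\{x_1:uT'x_1v\}$ is stable and $\{v_1:uT'xv_1\}$ is co-stable. Derived relations: $vR^{\partial11}zx$ iff $xT'zv$; $uR^{111}zx$ iff $\forall v\in Y(vR^{\partial11}zx\Rightarrow u\perp v)$; $R^{111}xz=\{u\in X:uR^{111}xz\}$. Upper bound relation: $uR_\le xz$ iff $x\le u$ and $z\le u$, and $R_\le xz=\{u:uR_\le xz\}$. Operations: $A\blacktriangleright B=(\{y:\exists x\in A\,\exists v\in B\ yTxv\})''$; $A\Rightarrow C={}'(A\blacktriangleright C')$; $A\odot F={}'(\{u:\exists x_1\in A\,\exists z_1\in F\ uR^{111}x_1z_1\}')$. *)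

Set Implicit Arguments.

Section Frames.
Variables (X Y : Type) (perp : X -> Y -> Prop).

Definition incl {Z : Type} (A B : Z -> Prop) : Prop := forall a, A a -> B a.
Definition cap {Z : Type} (A B : Z -> Prop) : Z -> Prop := fun a => A a /\ B a.
Definition seteq {Z : Type} (A B : Z -> Prop) : Prop := forall a, A a <-> B a.

Definition upper (U : X -> Prop) : Y -> Prop := fun y => forall x, U x -> perp x y.
Definition lower (V : Y -> Prop) : X -> Prop := fun x => forall y, V y -> perp x y.

Definition stable (A : X -> Prop) : Prop := seteq A (lower (upper A)).
Definition costable (B : Y -> Prop) : Prop := seteq B (upper (lower B)).

Definition leX (x z : X) : Prop := forall y, perp x y -> perp z y.
Definition leY (y v : Y) : Prop := forall x, perp x y -> perp x v.

Definition GammaX (x : X) : X -> Prop := fun u => leX x u.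
Definition GammaY (w : Y) : Y -> Prop := fun v => leY w v.

Variable T : Y -> X -> Y -> Prop.

Definition Tp (u x : X) (v : Y) : Prop := forall y, T y x v -> perp u y.

Record implicative_frame : Prop := {
  X_nonempty : inhabited X;
  Y_nonempty : inhabited Y;
  F0 : forall x y, perp x y <-> (forall u, Tp u x y);
  F1X : forall x z, leX x z -> leX z x -> x = z;
  F1Y : forall y v, leY y v -> leY v y -> y = v;
  F2 : forall x v, exists w, seteq (fun y => T y x v) (GammaY w);
  F3 : forall y x v x1 v1, T y x v -> leX x1 x -> leY v1 v -> T y x1 v1;
  F4 : forall u x v, stable (fun x1 => Tp u x1 v) /\ costable (fun v1 => Tp u x v1)
}.

Definition Rd11 (v : Y) (z x : X) : Prop := Tp x z v.
Definition R111 (u z x : X) : Prop := forall v, Rd11 v z x -> perp u v.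
Definition R111set (x z : X) : X -> Prop := fun u => R111 u x z.

Definition Rle (u x z : X) : Prop := leX x u /\ leX z u.
Definition Rleset (x z : X) : X -> Prop := fun u => Rle u x z.

Definition tri (A : X -> Prop) (B : Y -> Prop) : Y -> Prop :=
  upper (lower (fun y => exists x v, A x /\ B v /\ T y x v)).
Definition imp (A C : X -> Prop) : X -> Prop := lower (tri A (upper C)).
Definition odot (A F : X -> Prop) : X -> Prop :=
  lower (upper (fun u => exists x1 z1, A x1 /\ F z1 /\ R111 u x1 z1)).

(* Completeness of G(X) as a lattice always holds
   (meets = intersections, joins = closures of unions); the Heyting property
   with ⇒ as the implication amounts to: ⇒ maps stable sets to stable sets
   and, for stable A B C,  A ∩ C ⊆ B  iff  C ⊆ A ⇒ B. *)
Definition heyting_residual_of_cap : Prop :=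
  (forall A B, stable A -> stable B -> stable (imp A B)) /\
  (forall A B C, stable A -> stable B -> stable C ->
     (incl (cap A C) B <-> incl C (imp A B))).

End Frames.

(* By (F3), [R111 x1 z1] shrinks as [x1, z1] grow, so the union defining
   [Gamma x ⊙ Gamma z] is already [R111 x z], which is stable; thus
   [Gamma x ⊙ Gamma z = R111 x z], while [Gamma x ∩ Gamma z = R_≤ x z]
   literally; this gives (1) and (2).  Condition (F4) makes [⊙] left adjoint to
   [⇒] on stable sets.  Hence [⇒] is the residual of [∩] iff [⊙] and [∩] agree
   on stable sets (left adjoints are unique), and since [⊙] is the closure of a
   union of sets [R111 x1 z1], this happens iff it happens on principal upsets,
   i.e. iff [R111 x z = R_≤ x z] for all [x, z]. *)
Set Implicit Arguments.

Section SetAlgebra.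
Variable Z : Type.

Lemma seteq_sym (A B : Z -> Prop) : seteq A B -> seteq B A.
Proof. intros E a; split; apply E. Qed.

Lemma seteq_trans (A B C : Z -> Prop) : seteq A B -> seteq B C -> seteq A C.
Proof. intros E F a; split; intro H; [apply F, E | apply E, F]; exact H. Qed.

Lemma seteq_incl_antisym (A B : Z -> Prop) : incl A B -> incl B A -> seteq A B.
Proof. intros H K a; split; [apply H | apply K]. Qed.

Lemma incl_seteq (A A' B B' : Z -> Prop) :
  seteq A A' -> seteq B B' -> (incl A B <-> incl A' B').
Proof.
  intros EA EB; split; intros H a Ha.
  - apply EB, H, EA, Ha.
  - apply EB, H, EA, Ha.
Qed.

End SetAlgebra.

Section Closure.
Variables (X Y : Type) (perp : X -> Y -> Prop).

Lemma closure_ext (S : X -> Prop) : incl S (lower perp (upper perp S)).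
Proof. intros a Ha y Hy; exact (Hy a Ha). Qed.

Lemma closure_least (S C : X -> Prop) :
  stable perp C -> incl S C -> incl (lower perp (upper perp S)) C.
Proof.
  intros HC HS a Ha; apply HC; intros y Hy.
  apply Ha; intros x Hx; exact (proj1 (HC x) (HS x Hx) y Hy).
Qed.

Lemma lower_stable (V : Y -> Prop) : stable perp (lower perp V).
Proof.
  apply seteq_incl_antisym; [apply closure_ext |].
  intros a Ha y Hy; apply Ha; intros x Hx; exact (Hx y Hy).
Qed.

Lemma stable_upclosed (A : X -> Prop) x u :
  stable perp A -> A x -> leX perp x u -> A u.
Proof.
  intros HA Hx Hxu; apply HA; intros y Hy.
  exact (Hxu y (proj1 (HA x) Hx y Hy)).
Qed.

Lemma stable_cap (A C : X -> Prop) :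
  stable perp A -> stable perp C -> stable perp (cap A C).
Proof.
  intros HA HC; apply seteq_incl_antisym; [apply closure_ext |].
  intros a Ha; split.
  - exact (closure_least HA (fun b Hb => proj1 Hb) Ha).
  - exact (closure_least HC (fun b Hb => proj2 Hb) Ha).
Qed.

Lemma GammaX_stable x : stable perp (GammaX perp x).
Proof.
  apply seteq_incl_antisym; [apply closure_ext |].
  intros a Ha y Hy; exact (Ha y (fun b Hb => Hb y Hy)).
Qed.

End Closure.

Section ImplicativeFrame.
Variables (X Y : Type) (perp : X -> Y -> Prop) (T : Y -> X -> Y -> Prop).
Hypothesis HF : implicative_frame perp T.

Lemma R111_antitone u x z x1 z1 :
  leX perp x x1 -> leX perp z z1 -> R111 perp T u x1 z1 -> R111 perp T u x z.
Proof.
  intros Hx Hz HR v Hv; apply HR; intros y Hy.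
  apply Hz, Hv; exact (F3 HF _ Hy Hx (fun w Hw => Hw)).
Qed.

Lemma odot_GammaX x z :
  seteq (odot perp T (GammaX perp x) (GammaX perp z)) (R111set perp T x z).
Proof.
  apply seteq_incl_antisym.
  - apply closure_least; [apply lower_stable |].
    intros u (x1 & z1 & Hx & Hz & HR); exact (R111_antitone Hx Hz HR).
  - intros u Hu; apply closure_ext.
    exists x, z; repeat split; [intros y Hy; exact Hy | intros y Hy; exact Hy | exact Hu].
Qed.

(* Forward direction: by (F4) [{v1 | z1 T' x v1}] is co-stable, and every [u]
   perpendicular to it lies in [A ⊙ F ⊆ C], hence is perpendicular to [C']. *)
Lemma odot_residual (A F C : X -> Prop) :
  stable perp C -> (incl (odot perp T A F) C <-> incl F (imp perp T A C)).
Proof.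
  intros HC; split.
  - intros H z1 Hz1 y Hy; apply Hy.
    intros y' (x & v & HxA & Hv & HT).
    enough (Htp : Tp perp T z1 x v) by exact (Htp y' HT).
    apply (proj2 (F4 HF z1 x v)); intros u Hu; apply Hv, H, closure_ext.
    exists x, z1; repeat split; [exact HxA | exact Hz1 | exact Hu].
  - intros H; apply closure_least; [exact HC |].
    intros u (x1 & z1 & HxA & Hz1 & HR); apply HC; intros v Hv; apply HR.
    intros y HT; apply (H z1 Hz1); intros w Hw; apply Hw.
    exists x1, v; repeat split; [exact HxA | exact Hv | exact HT].
Qed.

Lemma odot_cap_of_cap_residual (A C : X -> Prop) :
  (forall A B C, stable perp A -> stable perp B -> stable perp C ->
     (incl (cap A C) B <-> incl C (imp perp T A B))) ->
  stable perp A -> stable perp C -> seteq (odot perp T A C) (cap A C).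
Proof.
  intros Hres HA HC; pose proof (stable_cap HA HC) as HAC.
  apply seteq_incl_antisym.
  - apply (odot_residual _ _ HAC), (Hres _ _ _ HA HAC HC); intros a Ha; exact Ha.
  - apply (Hres _ _ _ HA (lower_stable _ _) HC), (odot_residual _ _ (lower_stable _ _)).
    intros a Ha; exact Ha.
Qed.

Lemma odot_cap_of_R111_Rle (A C : X -> Prop) :
  (forall x z, seteq (R111set perp T x z) (Rleset perp x z)) ->
  stable perp A -> stable perp C -> seteq (odot perp T A C) (cap A C).
Proof.
  intros HR HA HC; apply seteq_incl_antisym.
  - apply closure_least; [exact (stable_cap HA HC) |].
    intros u (x1 & z1 & Hx & Hz & Hu); destruct (proj1 (HR x1 z1 u) Hu) as [Hxu Hzu].
    split; [exact (stable_upclosed HA Hx Hxu) | exact (stable_upclosed HC Hz Hzu)].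
  - intros a (Ha & Hc); apply closure_ext; exists a, a; repeat split; [exact Ha | exact Hc |].
    apply HR; split; intros y Hy; exact Hy.
Qed.

Lemma heyting_residual_of_cap_iff_R111_Rle :
  heyting_residual_of_cap perp T <->
  (forall x z, seteq (R111set perp T x z) (Rleset perp x z)).
Proof.
  split.
  - intros [_ Hres] x z; apply seteq_trans with (1 := seteq_sym (odot_GammaX x z)).
    exact (odot_cap_of_cap_residual Hres (GammaX_stable perp x) (GammaX_stable perp z)).
  - intros HR; split; [intros; apply lower_stable |].
    intros A B C HA HB HC; apply iff_trans with (2 := odot_residual A C HB).
    apply incl_seteq; [exact (seteq_sym (odot_cap_of_R111_Rle HR HA HC)) | intros a; apply iff_refl].
Qed.

End ImplicativeFrame.

Theorem proposition3p14 (X Y : Type) (perp : X -> Y -> Prop)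
  (T : Y -> X -> Y -> Prop) :
  implicative_frame perp T ->
  (forall x z : X,
     (incl (cap (GammaX perp x) (GammaX perp z))
           (odot perp T (GammaX perp x) (GammaX perp z))
      <-> incl (Rleset perp x z) (R111set perp T x z))
  /\ (incl (odot perp T (GammaX perp x) (GammaX perp z))
           (cap (GammaX perp x) (GammaX perp z))
      <-> incl (R111set perp T x z) (Rleset perp x z)))
  /\
  (heyting_residual_of_cap perp T
   <-> (forall x z : X, seteq (R111set perp T x z) (Rleset perp x z))).
Proof.
  intros HF; split.
  - intros x z; pose proof (odot_GammaX HF x z) as E.
    assert (Ecap : seteq (cap (GammaX perp x) (GammaX perp z)) (Rleset perp x z))
      by (intros a; apply iff_refl).
    split; apply incl_seteq; assumption.
  - exact (heyting_residual_of_cap_iff_R111_Rle HF).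
Qed.
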